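(* Let $R$ be an excellent normal two-dimensional local ring, $\phi:X\to\operatorname{Spec}(R)$ a resolution of singularities, and $D_1\le D_2$ effective divisors on $X$ with exceptional support, with respective anti-nef parts of their Zariski decompositions $\Delta_1$ and $\Delta_2$. Then $(\Delta_2^2)\le(\Delta_1^2)$, with equality if and only if $\Delta_1=\Delta_2$.
   Context: The intersection form on exceptional curves of $X$ is negative definite. A $\mathbb Q$-divisor $C$ with exceptional support is anti-nef if $(C\cdot E)\le0$ for all exceptional curves $E$. For an effective divisor $D$ with exceptional support, the anti-nef part $\Delta$ of its Zariski decomposition is the unique minimal effective anti-nef $\mathbb Q$-divisor with exceptional support such that $D\le\Delta$. *)

(* Exceptional curves E_0..E_{n-1} of the resolution X -> Spec R
   are indexed by 'I_n; M i j = (E_i . E_j) is the (integer) intersection matrix.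
   A (Q-)divisor with exceptional support is its coefficient vector. *)
From HB Require Import structures.
From mathcomp Require Import all_boot all_order all_algebra.
Set Implicit Arguments. Unset Strict Implicit. Unset Printing Implicit Defensive.
Import Order.TTheory GRing.Theory Num.Theory.
Local Open Scope ring_scope.

Definition qdiv (n : nat) := {ffun 'I_n -> rat}.

Definition qdiv_of_int (n : nat) (D : {ffun 'I_n -> int}) : qdiv n :=
  [ffun i => (D i)%:~R].

Definition inter (n : nat) (M : 'M[int]_n) (x y : qdiv n) : rat :=
  \sum_(i < n) \sum_(j < n) x i * (M i j)%:~R * y j.

Definition exc_intersection_matrix (n : nat) (M : 'M[int]_n) : Prop :=
  (forall i j, M i j = M j i) /\
  (forall i j, i != j -> 0 <= M i j) /\
  (forall x : qdiv n, x != 0 -> inter M x x < 0).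

Definition effective (n : nat) (x : qdiv n) : Prop := forall i, 0 <= x i.

Definition qle (n : nat) (x y : qdiv n) : Prop := forall i, x i <= y i.

Definition anti_nef (n : nat) (M : 'M[int]_n) (C : qdiv n) : Prop :=
  forall i, inter M C [ffun j => if j == i then 1 else 0] <= 0.

Definition effective_antinef_above (n : nat) (M : 'M[int]_n) (D : qdiv n)
  (C : qdiv n) : Prop :=
  effective C /\ anti_nef M C /\ qle D C.

(* Delta is the unique minimal effective anti-nef Q-divisor with D <= Delta *)
Definition antinef_part (n : nat) (M : 'M[int]_n) (D : {ffun 'I_n -> int})
  (Delta : qdiv n) : Prop :=
  effective_antinef_above M (qdiv_of_int D) Delta /\
  (forall C, effective_antinef_above M (qdiv_of_int D) C ->
     qle C Delta -> C = Delta) /\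
  (forall C, effective_antinef_above M (qdiv_of_int D) C ->
     (forall C', effective_antinef_above M (qdiv_of_int D) C' -> qle C' C -> C' = C) ->
     C = Delta).

(* Minimality of the anti-nef part makes it monotone: min(Delta1, Delta2) is again
   effective, anti-nef (the off-diagonal intersection numbers are nonnegative) and
   above D1, so it equals Delta1, i.e. Delta1 <= Delta2.  Writing Delta2 = Delta1 + F
   with F effective, (Delta2^2) = (Delta1^2) + 2 (Delta1 . F) + (F^2), where
   (Delta1 . F) <= 0 because Delta1 is anti-nef and (F^2) <= 0 with equality only for
   F = 0 by negative definiteness. *)
From mathcomp Require Import all_boot all_order all_algebra.
From mathcomp.algebra_tactics Require Import ring lra.
Set Implicit Arguments. Unset Strict Implicit. Unset Printing Implicit Defensive.
Import Order.TTheory GRing.Theory Num.Theory.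
Local Open Scope ring_scope.

Section IntersectionForm.

Variables (n : nat) (M : 'M[int]_n).

Definition exc_curve (i : 'I_n) : qdiv n := [ffun j => if j == i then 1 else 0].

Lemma inter_curver (x : qdiv n) i : inter M x (exc_curve i) = \sum_j x j * (M j i)%:~R.
Proof.
apply: eq_bigr => j _; rewrite (bigD1 i) //= big1 ?addr0 => [|k /negbTE nki].
  by rewrite ffunE eqxx mulr1.
by rewrite ffunE nki mulr0.
Qed.

Lemma inter_expandr (x y : qdiv n) : inter M x y = \sum_j y j * inter M x (exc_curve j).
Proof.
rewrite {1}/inter exchange_big; apply: eq_bigr => j _.
by rewrite inter_curver mulr_sumr; apply: eq_bigr => i _; rewrite mulrC.
Qed.

Lemma inter_addl (x y z : qdiv n) : inter M (x + y) z = inter M x z + inter M y z.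
Proof.
rewrite /inter -big_split; apply: eq_bigr => i _; rewrite -big_split.
by apply: eq_bigr => j _; rewrite ffunE !mulrDl.
Qed.

Lemma anti_nef_inter_le0 (C y : qdiv n) : anti_nef M C -> effective y -> inter M C y <= 0.
Proof.
move=> antiC y_ge0; rewrite inter_expandr; apply: sumr_le0 => j _.
exact: mulr_ge0_le0 (y_ge0 j) (antiC j).
Qed.

Hypothesis M_sym : forall i j, M i j = M j i.

Lemma inter_sym (x y : qdiv n) : inter M x y = inter M y x.
Proof.
rewrite /inter exchange_big; apply: eq_bigr => i _; apply: eq_bigr => j _.
by rewrite M_sym mulrC (mulrC (x j)) mulrA.
Qed.

Lemma inter_addr (x y z : qdiv n) : inter M x (y + z) = inter M x y + inter M x z.
Proof. by rewrite inter_sym inter_addl !(inter_sym x). Qed.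

Lemma inter_self_add (x y : qdiv n) :
  inter M (x + y) (x + y) = inter M x x + 2 * inter M x y + inter M y y.
Proof. rewrite inter_addl !inter_addr (inter_sym y x); ring. Qed.

Hypothesis M_offdiag_ge0 : forall i j, i != j -> 0 <= M i j.

Lemma le_inter_curve (C A : qdiv n) i :
  C i = A i -> qle C A -> inter M C (exc_curve i) <= inter M A (exc_curve i).
Proof.
move=> CAi leCA; rewrite !inter_curver; apply: ler_sum => j _.
have [->|nji] := eqVneq j i; first by rewrite CAi.
by apply: ler_wpM2r; [rewrite ler0z M_offdiag_ge0 | apply: leCA].
Qed.

Lemma anti_nef_min (C A : qdiv n) :
  anti_nef M C -> anti_nef M A -> anti_nef M [ffun i => Num.min (C i) (A i)].
Proof.
move=> antiC antiA i; rewrite -/(exc_curve i); set m := [ffun j => Num.min _ _].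
have [lemC lemA] : qle m C /\ qle m A by split=> j; rewrite ffunE ge_min lexx ?orbT.
have [mC|mA] : m i = C i \/ m i = A i by rewrite ffunE; case: leP; [left|right].
- exact: le_trans (le_inter_curve mC lemC) (antiC i).
- exact: le_trans (le_inter_curve mA lemA) (antiA i).
Qed.

Lemma effective_antinef_above_min (D D' C C' : qdiv n) : qle D D' ->
  effective_antinef_above M D C -> effective_antinef_above M D' C' ->
  effective_antinef_above M D [ffun i => Num.min (C i) (C' i)].
Proof.
move=> leDD' [C_ge0 [antiC leDC]] [C'_ge0 [antiC' leDC']].
split; [|split]; first by move=> i; rewrite ffunE le_min C_ge0 C'_ge0.
  exact: anti_nef_min.
by move=> i; rewrite ffunE le_min leDC (le_trans (leDD' i) (leDC' i)).
Qed.

Lemma antinef_part_le (D1 D2 : {ffun 'I_n -> int}) (Delta1 Delta2 : qdiv n) :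
  (forall i, D1 i <= D2 i) -> antinef_part M D1 Delta1 -> antinef_part M D2 Delta2 ->
  qle Delta1 Delta2.
Proof.
move=> leD12 [above1 [min1 _]] [above2 _].
have leD12q : qle (qdiv_of_int D1) (qdiv_of_int D2) by move=> i; rewrite !ffunE ler_int.
have leminDelta1 : qle [ffun i => Num.min (Delta1 i) (Delta2 i)] Delta1.
  by move=> i; rewrite ffunE ge_min lexx.
have <- := min1 _ (effective_antinef_above_min leD12q above1 above2) leminDelta1.
by move=> i; rewrite ffunE ge_min lexx orbT.
Qed.

Hypothesis M_negdef : forall x : qdiv n, x != 0 -> inter M x x < 0.

Lemma inter_self_add_effective_leif (C F : qdiv n) : anti_nef M C -> effective F ->
  inter M (C + F) (C + F) <= inter M C C ?= iff (F == 0).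
Proof.
move=> antiC F_ge0; apply/leifP.
have [->|/M_negdef FF_lt0] := eqVneq F 0; first by rewrite addr0 eqxx.
have CF_le0 := anti_nef_inter_le0 antiC F_ge0.
rewrite inter_self_add; lra.
Qed.

End IntersectionForm.

Theorem corollary5p3 (n : nat) (M : 'M[int]_n)
  (D1 D2 : {ffun 'I_n -> int}) (Delta1 Delta2 : qdiv n) :
  exc_intersection_matrix M ->
  (forall i, 0 <= D1 i) -> (forall i, 0 <= D2 i) ->
  (forall i, D1 i <= D2 i) ->
  antinef_part M D1 Delta1 -> antinef_part M D2 Delta2 ->
  inter M Delta2 Delta2 <= inter M Delta1 Delta1 /\
  (inter M Delta2 Delta2 = inter M Delta1 Delta1 <-> Delta1 = Delta2).
Proof.
move=> [M_sym [M_offdiag_ge0 M_negdef]] _ _ leD12 part1 part2.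
have leDelta12 := antinef_part_le M_offdiag_ge0 leD12 part1 part2.
have [_ [antiDelta1 _]] := part1.1.
have F_ge0 : effective (Delta2 - Delta1) by move=> i; rewrite !ffunE subr_ge0; apply: leDelta12.
have := inter_self_add_effective_leif M_sym M_negdef antiDelta1 F_ge0.
rewrite addrC subrK subr_eq0 => -[le_self eq_self].
split; first exact: le_self.
split=> [/eqP|->//].
by rewrite eq_self eq_sym => /eqP.
Qed.
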